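(* Let $\mathcal H$ be a graded connected Hopf algebra over a field $\Bbbk$ and $\varphi,\psi\colon\mathcal H\to\Bbbk$ characters. Then: (a) $S(\varphi,\psi)=\{h\in\mathcal H : f(h)=0\ \text{for all } f\in I(\varphi,\psi)\}$; (b) $I(\varphi,\psi)$ is a graded Hopf ideal of $\mathcal H^*$; (c) $S(\varphi,\psi)$ is a graded Hopf subalgebra of $\mathcal H$; (d) a homogeneous element $h\in\mathcal H$ belongs to $S(\varphi,\psi)$ if and only if $\bigl(\mathrm{id}\otimes(\varphi-\psi)\otimes\mathrm{id}\bigr)\circ\Delta^{(2)}(h)=0$.
   Context: $\mathcal H=\bigoplus_{n\ge0}\mathcal H_n$ is graded connected ($\mathcal H_0=\Bbbk\cdot1$, graded structure maps) with each $\mathcal H_n$ finite-dimensional; $\Delta^{(2)}=(\Delta\otimes\mathrm{id})\circ\Delta$. $\mathcal H^*=\bigoplus_n(\mathcal H_n)^*$ is the graded dual Hopf algebra (product = convolution). For a linear functional $\varphi$, $\varphi_n=\varphi|_{\mathcal H_n}\in(\mathcal H_n)^*$. A character is an algebra morphism $\mathcal H\to\Bbbk$. $S(\varphi,\psi)$ denotes the largest graded subcoalgebra of $\mathcal H$ on which $\varphi(h)=\psi(h)$ for all $h$, and $I(\varphi,\psi)$ denotes the ideal of $\mathcal H^*$ generated by the elements $\varphi_n-\psi_n$, $n\ge0$. *)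

From HB Require Import structures.
From mathcomp Require Import all_boot all_order all_algebra.
From mathcomp Require Import finmap.
From mathcomp.multinomials Require Import monalg.

Set Implicit Arguments.
Unset Strict Implicit.
Unset Printing Implicit Defensive.

Import GRing.Theory.
Local Open Scope fset_scope.
Local Open Scope ring_scope.

Section Defs.
Variable K : fieldType.

(* {malg K[X]} = free K-vector space on the basis X; the free vector   *)
(* space on X * Y is the tensor product of those on X and on Y.        *)

Definition lift {X : choiceType} {W : lmodType K} (f : X -> W)
  (v : {malg K[X]}) : W := \sum_(x <- msupp v) v@_x *: f x.

Definition tens {X Y : choiceType} (u : {malg K[X]}) (w : {malg K[Y]})
  : {malg K[(X * Y)%type]} :=
  \sum_(x <- msupp u) \sum_(y <- msupp w) (u@_x * w@_y) *: << (x, y) >>.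

Definition tmap {X Y X' Y' : choiceType}
  (f : {malg K[X]} -> {malg K[X']}) (g : {malg K[Y]} -> {malg K[Y']})
  : {malg K[(X * Y)%type]} -> {malg K[(X' * Y')%type]} :=
  lift (fun p : X * Y => tens (f << p.1 >>) (g << p.2 >>)).

Definition assocr3 {X Y Z : choiceType}
  : {malg K[(X * (Y * Z))%type]} -> {malg K[((X * Y) * Z)%type]} :=
  lift (fun p : X * (Y * Z) => << ((p.1, p.2.1), p.2.2) >>).

(* evaluation of a linear functional, given by its values on the basis *)
Definition ev {X : choiceType} (f : X -> K) (v : {malg K[X]}) : K :=
  \sum_(x <- msupp v) v@_x * f x.

(* Structure data of a graded Hopf algebra H = {malg K[B]}, presented  *)
(* on a homogeneous basis B containing the unit 1.                     *)
Record hopf_data (B : choiceType) := HopfData {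
  deg : B -> nat;
  unitb : B;
  mulb : B -> B -> {malg K[B]};
  comulb : B -> {malg K[(B * B)%type]};
  counitb : B -> K;
  antipb : B -> {malg K[B]}
}.

Section Ops.
Variables (B : choiceType) (H : hopf_data B).

Definition hmul (u v : {malg K[B]}) : {malg K[B]} :=
  \sum_(a <- msupp u) \sum_(b <- msupp v) (u@_a * v@_b) *: mulb H a b.
Definition hone : {malg K[B]} := << unitb H >>.
Definition hcomul : {malg K[B]} -> {malg K[(B * B)%type]} := lift (comulb H).
Definition hcounit (v : {malg K[B]}) : K := ev (counitb H) v.
Definition hantip : {malg K[B]} -> {malg K[B]} := lift (antipb H).
Definition hmulT : {malg K[(B * B)%type]} -> {malg K[B]} :=
  lift (fun p : B * B => mulb H p.1 p.2).
Definition hmul2 (w w' : {malg K[(B * B)%type]}) : {malg K[(B * B)%type]} :=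
  \sum_(p <- msupp w) \sum_(q <- msupp w')
     (w@_p * w'@_q) *: tens (mulb H p.1 q.1) (mulb H p.2 q.2).
Definition counit_l : {malg K[(B * B)%type]} -> {malg K[B]} :=
  lift (fun p : B * B => counitb H p.1 *: << p.2 >>).
Definition counit_r : {malg K[(B * B)%type]} -> {malg K[B]} :=
  lift (fun p : B * B => counitb H p.2 *: << p.1 >>).

Definition homog (n : nat) (v : {malg K[B]}) : Prop :=
  forall b, b \in msupp v -> deg H b = n.
Definition hcomp (n : nat) (v : {malg K[B]}) : {malg K[B]} :=
  \sum_(b <- msupp v | deg H b == n) v@_b *: << b >>.

Definition graded_connected_hopf : Prop :=
  (forall n, exists s : seq B, forall b, deg H b = n -> b \in s) /\
  (deg H (unitb H) = 0%N /\ (forall b, deg H b = 0%N -> b = unitb H)) /\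
  [/\ forall a b c, c \in msupp (mulb H a b) -> deg H c = (deg H a + deg H b)%N,
      forall b p, p \in msupp (comulb H b) -> (deg H p.1 + deg H p.2)%N = deg H b,
      forall b, counitb H b != 0 -> deg H b = 0%N &
      forall b c, c \in msupp (antipb H b) -> deg H c = deg H b] /\
  ((forall u v w, hmul (hmul u v) w = hmul u (hmul v w)) /\
   (forall v, hmul hone v = v /\ hmul v hone = v)) /\
  ((forall v, tmap hcomul id (hcomul v) = assocr3 (tmap id hcomul (hcomul v))) /\
   (forall v, counit_l (hcomul v) = v /\ counit_r (hcomul v) = v)) /\
  [/\ forall u v, hcomul (hmul u v) = hmul2 (hcomul u) (hcomul v),
      hcomul hone = tens hone hone,
      forall u v, hcounit (hmul u v) = hcounit u * hcounit v &
      hcounit hone = 1] /\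
  (forall v, hmulT (tmap hantip id (hcomul v)) = hcounit v *: hone /\
             hmulT (tmap id hantip (hcomul v)) = hcounit v *: hone).

Definition character (phi : B -> K) : Prop :=
  (forall u v, ev phi (hmul u v) = ev phi u * ev phi v) /\ ev phi hone = 1.

Definition subspace (C : {malg K[B]} -> Prop) : Prop :=
  C 0 /\ forall (a : K) u v, C u -> C v -> C (a *: u + v).

Definition graded_subspace (C : {malg K[B]} -> Prop) : Prop :=
  subspace C /\ forall n v, C v -> C (hcomp n v).

Definition in_tens (C D : {malg K[B]} -> Prop) (w : {malg K[(B * B)%type]}) : Prop :=
  exists (m : nat) (c d : 'I_m -> {malg K[B]}),
    (forall i, C (c i) /\ D (d i)) /\ w = \sum_(i < m) tens (c i) (d i).

Definition subcoalgebra (C : {malg K[B]} -> Prop) : Prop :=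
  subspace C /\ forall v, C v -> in_tens C C (hcomul v).

Definition Sphipsi (phi psi : B -> K) (h : {malg K[B]}) : Prop :=
  exists C : {malg K[B]} -> Prop,
    [/\ graded_subspace C, subcoalgebra C,
        (forall x, C x -> ev phi x = ev psi x) & C h].

Definition graded_hopf_subalgebra (C : {malg K[B]} -> Prop) : Prop :=
  [/\ graded_subspace C, C hone, (forall u v, C u -> C v -> C (hmul u v)),
      subcoalgebra C & forall v, C v -> C (hantip v)].

(* elements of H^* = linear functionals (values on the basis) vanishing
   on all but finitely many H_n *)
Definition in_dual (f : B -> K) : Prop :=
  exists N, forall b, (N <= deg H b)%N -> f b = 0.

Definition dcomp (n : nat) (f : B -> K) : B -> K :=
  fun b => if deg H b == n then f b else 0.

Definition conv (f g : B -> K) : B -> K :=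
  fun b => ev (fun p : B * B => f p.1 * g p.2) (comulb H b).

(* coproduct of H^*, valued in H^* (x) H^* = graded dual of H (x) H *)
Definition dcomul (f : B -> K) : B * B -> K :=
  fun p => ev f (mulb H p.1 p.2).
Definition dcounit (f : B -> K) : K := f (unitb H).
Definition dantip (f : B -> K) : B -> K := fun b => ev f (antipb H b).

Definition dsubspace (J : (B -> K) -> Prop) : Prop :=
  J (fun _ => 0) /\
  forall (a : K) f g, J f -> J g -> J (fun b => a * f b + g b).

Definition graded_hopf_ideal (J : (B -> K) -> Prop) : Prop :=
  (forall f, J f -> in_dual f) /\ dsubspace J /\
  (forall f g, in_dual g -> J f -> J (conv f g) /\ J (conv g f)) /\
  (forall n f, J f -> J (dcomp n f)) /\
  (* coideal: Delta(J) in J (x) H^* + H^* (x) J *)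
  (forall f, J f ->
     exists (m : nat) (a c : 'I_m -> B -> K),
       (forall i, [/\ in_dual (a i), in_dual (c i) & J (a i) \/ J (c i)]) /\
       forall p, dcomul f p = \sum_(i < m) a i p.1 * c i p.2) /\
  (forall f, J f -> dcounit f = 0) /\
  (forall f, J f -> J (dantip f)).

Definition Iphipsi (phi psi : B -> K) (f : B -> K) : Prop :=
  exists (m : nat) (a c : 'I_m -> B -> K) (k : 'I_m -> nat),
    (forall i, in_dual (a i) /\ in_dual (c i)) /\
    forall b, f b = \sum_(i < m)
       conv (conv (a i) (dcomp (k i) (fun x => phi x - psi x))) (c i) b.

Definition comul2 (h : {malg K[B]}) : {malg K[((B * B) * B)%type]} :=
  tmap hcomul id (hcomul h).

Definition mid_map (chi : B -> K) : {malg K[((B * B) * B)%type]} -> {malg K[(B * B)%type]} :=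
  lift (fun p : (B * B) * B => chi p.1.2 *: << (p.1.1, p.2) >>).

End Ops.
End Defs.

(* Write I = I(phi, psi) and Ann(I) for the set of h in H killed by every
   element of I.  Everything rests on S(phi, psi) = Ann(I).  A graded
   subcoalgebra C on which phi = psi is killed by a (phi_k - psi_k) c, since
   evaluating it at h in C goes through Delta^(2) h in C (x) C (x) C.
   Conversely Ann(I) is such a subcoalgebra: it is graded since I is, phi = psi
   on it since phi - psi is the sum of the phi_k - psi_k, and
   Delta(Ann I) lies in Ann I (x) Ann I because I is a two-sided ideal of the
   convolution algebra and each H_n is finite-dimensional.  As phi and psi are
   characters, Delta(phi_k - psi_k) is the sum over i of
   (phi_i - psi_i) (x) phi_(k-i) + psi_i (x) (phi_(k-i) - psi_(k-i)), so I is
   a coideal and Ann(I) is a subalgebra; the recursion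
   S(h) = eps(h) 1 - sum_(j < n) S(h'_j) h''_(n-j) for h of degree n then gives
   S(Ann I) in Ann I by induction on n.  Finite-dimensional duality in each
   degree gives I = Ann(Ann I) in the graded dual, whence S(I) in I.  Finally,
   for homogeneous h the coefficient of x (x) z in
   (id (x) (phi - psi) (x) id) Delta^(2) h is the value at h of
   delta_x (phi_k - psi_k) delta_z for the one k allowed by the grading, and
   these elements span I up to the grading. *)

From Pilot Require Import Defs.
From HB Require Import structures.
From mathcomp Require Import all_boot all_order all_algebra.
From mathcomp Require Import finmap.
From mathcomp.multinomials Require Import monalg.
From mathcomp Require Import ring zify.
From Stdlib Require Import Classical FunctionalExtensionality PropExtensionality.
From Stdlib Require List.

Set Implicit Arguments.
Unset Strict Implicit.
Unset Printing Implicit Defensive.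
Import GRing.Theory.
Local Open Scope fset_scope.
Local Open Scope ring_scope.

Section LinearForms.
Variable K : fieldType.
Implicit Types X Y : choiceType.

Lemma ev_fsubset X (f : X -> K) (v : {malg K[X]}) (d : {fset X}) :
  msupp v `<=` d -> ev f v = \sum_(x <- d) v@_x * f x.
Proof.
move=> sub; apply: big_fset_incl => // x _ xNv.
by rewrite mcoeff_outdom // mul0r.
Qed.

Lemma ev_linr X (f : X -> K) a (u v : {malg K[X]}) :
  ev f (a *: u + v) = a * ev f u + ev f v.
Proof.
have sw : msupp (a *: u + v) `<=` msupp u `|` msupp v.
  by apply: fsubset_trans (msuppD_le _ _) _; apply: fsetUSS => //; apply: msuppZ_le.
rewrite (ev_fsubset _ sw) (ev_fsubset _ (fsubsetUl (msupp u) (msupp v))).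
rewrite (ev_fsubset _ (fsubsetUr (msupp u) (msupp v))).
rewrite big_distrr -big_split /=; apply: eq_bigr => x _; rewrite mcoeffD mcoeffZ; ring.
Qed.

Lemma ev0r X (f : X -> K) : ev f 0 = 0.
Proof. by rewrite /ev msupp0 big_seq_fset0. Qed.

Lemma evDr X (f : X -> K) (u v : {malg K[X]}) : ev f (u + v) = ev f u + ev f v.
Proof. by have := ev_linr f 1 u v; rewrite scale1r mul1r. Qed.

Lemma evZr X (f : X -> K) a (u : {malg K[X]}) : ev f (a *: u) = a * ev f u.
Proof. by have := ev_linr f a u 0; rewrite !addr0 ev0r addr0. Qed.

Lemma ev_sumr X (f : X -> K) (I : Type) (r : seq I) (P : pred I)
    (F : I -> {malg K[X]}) :
  ev f (\sum_(i <- r | P i) F i) = \sum_(i <- r | P i) ev f (F i).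
Proof. exact: (big_morph (ev f) (evDr f) (ev0r f)). Qed.

Lemma evU1 X (f : X -> K) (x : X) : ev f << x >> = f x.
Proof.
by rewrite (@ev_fsubset _ _ _ [fset x]) ?msuppU_le // big_seq_fset1 mcoeffUU mul1r.
Qed.

Lemma eq_in_ev X (f g : X -> K) (v : {malg K[X]}) :
  {in msupp v, f =1 g} -> ev f v = ev g v.
Proof.
move=> efg; rewrite /ev big_seq_cond [RHS]big_seq_cond.
by apply: eq_bigr => x /andP[/efg ->].
Qed.

Lemma ev_linl X (f g : X -> K) a (v : {malg K[X]}) :
  ev (fun x => a * f x + g x) v = a * ev f v + ev g v.
Proof. by rewrite /ev big_distrr -big_split /=; apply: eq_bigr => x _; ring. Qed.

Lemma ev0l X (v : {malg K[X]}) : ev (fun _ : X => 0) v = 0.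
Proof. by rewrite /ev big1 // => x _; rewrite mulr0. Qed.

Lemma evDl X (f g : X -> K) (v : {malg K[X]}) :
  ev (fun x => f x + g x) v = ev f v + ev g v.
Proof. by rewrite -[ev f v]mul1r -ev_linl; apply: eq_in_ev => x _; rewrite mul1r. Qed.

Lemma evBl X (f g : X -> K) (v : {malg K[X]}) :
  ev (fun x => f x - g x) v = ev f v - ev g v.
Proof. by rewrite /ev -sumrB; apply: eq_bigr => x _; rewrite mulrBr. Qed.

Lemma evZl X (f : X -> K) a (v : {malg K[X]}) :
  ev (fun x => a * f x) v = a * ev f v.
Proof. by rewrite /ev big_distrr; apply: eq_bigr => x _ /=; ring. Qed.

Lemma evMl X (f : X -> K) a (v : {malg K[X]}) :
  ev (fun x => f x * a) v = ev f v * a.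
Proof. by rewrite /ev big_distrl; apply: eq_bigr => x _; rewrite mulrA. Qed.

Lemma ev_suml X (I : Type) (r : seq I) (P : pred I) (F : I -> X -> K)
    (v : {malg K[X]}) :
  ev (fun x => \sum_(i <- r | P i) F i x) v = \sum_(i <- r | P i) ev (F i) v.
Proof. by rewrite /ev exchange_big; apply: eq_bigr => x _; rewrite big_distrr. Qed.

Lemma ev_neq0 X (f : X -> K) (v : {malg K[X]}) :
  ev f v != 0 -> exists2 x, x \in msupp v & f x != 0.
Proof.
have [/hasP[x xv fx] _|/hasPn f0] := boolP (has (fun x => f x != 0) (msupp v)).
  by exists x.
by rewrite (@eq_in_ev _ f (fun _ => 0)) ?ev0l ?eqxx // => x /f0 /negPn /eqP.
Qed.

Definition delta X (x : X) : X -> K := fun y => (y == x)%:R.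

Lemma ev_delta X (x : X) (v : {malg K[X]}) : ev (delta x) v = v@_x.
Proof.
have [xv|xNv] := boolP (x \in msupp v).
  rewrite /ev (big_fsetD1 x) //= /delta eqxx mulr1 big1_fset ?addr0 // => y.
  by rewrite in_fsetD1 => /andP[/negbTE ->]; rewrite mulr0.
rewrite (mcoeff_outdom xNv) -(ev0l v); apply: eq_in_ev => y yv.
by rewrite /delta; case: eqP => // eyx; rewrite -eyx yv in xNv.
Qed.

Lemma delta_pair X Y (x : X) (y : Y) (p : X * Y) :
  delta (x, y) p = delta x p.1 * delta y p.2.
Proof.
case: p => a b; rewrite /delta /= xpair_eqE.
by case: (a == x); case: (b == y); rewrite ?mul1r ?mul0r.
Qed.

Lemma ev_inj X (u v : {malg K[X]}) : (forall f, ev f u = ev f v) -> u = v.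
Proof. by move=> e; apply/malgP => x; rewrite -!ev_delta e. Qed.

Lemma ev_lift X Y (f : Y -> K) (g : X -> {malg K[Y]}) (v : {malg K[X]}) :
  ev f (Defs.lift g v) = ev (fun x => ev f (g x)) v.
Proof. by rewrite ev_sumr; apply: eq_bigr => x _; rewrite evZr. Qed.

Lemma liftU X Y (g : X -> {malg K[Y]}) (x : X) : Defs.lift g << x >> = g x.
Proof. by apply: ev_inj => f; rewrite ev_lift evU1. Qed.

Lemma liftZ X Y (g : X -> {malg K[Y]}) a (u : {malg K[X]}) :
  Defs.lift g (a *: u) = a *: Defs.lift g u.
Proof. by apply: ev_inj => f; rewrite ev_lift !evZr ev_lift. Qed.

Lemma lift_sum X Y (g : X -> {malg K[Y]}) (I : Type) (r : seq I)
    (F : I -> {malg K[X]}) :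
  Defs.lift g (\sum_(i <- r) F i) = \sum_(i <- r) Defs.lift g (F i).
Proof.
apply: ev_inj => f; rewrite ev_lift !ev_sumr.
by apply: eq_bigr => i _; rewrite ev_lift.
Qed.

Lemma msupp_lift X Y (g : X -> {malg K[Y]}) (v : {malg K[X]}) y :
  y \in msupp (Defs.lift g v) -> exists2 x, x \in msupp v & y \in msupp (g x).
Proof.
rewrite -mcoeff_neq0 -ev_delta ev_lift => /ev_neq0 [x xv].
by rewrite ev_delta mcoeff_neq0; exists x.
Qed.

Lemma msuppU1 X (x y : X) : y \in msupp (<< x >> : {malg K[X]}) -> y = x.
Proof. by rewrite msuppU oner_eq0 inE => /eqP. Qed.

Lemma ev_comm X Y (F : X -> Y -> K) (u : {malg K[X]}) (v : {malg K[Y]}) :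
  ev (fun x => ev (F x) v) u = ev (fun y => ev (F^~ y) u) v.
Proof.
rewrite /ev; under eq_bigr do rewrite big_distrr.
rewrite exchange_big; apply: eq_bigr => y _; rewrite big_distrr.
by apply: eq_bigr => x _ /=; ring.
Qed.

Lemma ev_tens X Y (F : X * Y -> K) (u : {malg K[X]}) (w : {malg K[Y]}) :
  ev F (tens u w) = ev (fun x => ev (fun y => F (x, y)) w) u.
Proof.
rewrite ev_sumr; apply: eq_bigr => x _; rewrite ev_sumr big_distrr.
by apply: eq_bigr => y _; rewrite evZr evU1 /= mulrA.
Qed.

Lemma ev_tens_mul X Y (f : X -> K) (g : Y -> K) u w :
  ev (fun p : X * Y => f p.1 * g p.2) (tens u w) = ev f u * ev g w.
Proof. by rewrite ev_tens -evMl; apply: eq_in_ev => x _ /=; rewrite evZl. Qed.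

Lemma tensU X Y (x : X) (y : Y) :
  tens (<< x >> : {malg K[X]}) (<< y >> : {malg K[Y]}) = << (x, y) >>.
Proof. by apply: ev_inj => f; rewrite ev_tens !evU1. Qed.

Lemma mcoeff_tens X Y (u : {malg K[X]}) (w : {malg K[Y]}) x y :
  (tens u w)@_(x, y) = u@_x * w@_y.
Proof.
by rewrite -!ev_delta -ev_tens_mul; apply: eq_in_ev => p _; rewrite delta_pair.
Qed.

Lemma msupp_tens X Y (u : {malg K[X]}) (w : {malg K[Y]}) p :
  p \in msupp (tens u w) -> p.1 \in msupp u /\ p.2 \in msupp w.
Proof.
case: p => x y; rewrite -mcoeff_neq0 mcoeff_tens mulf_eq0 negb_or.
by rewrite !mcoeff_neq0 => /andP.
Qed.

Lemma bounded_supp X (d : X -> nat) (v : {malg K[X]}) :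
  exists N, forall x, x \in msupp v -> (d x < N)%N.
Proof.
exists (\max_(x <- msupp v) (d x).+1) => x xv.
exact: (@leq_bigmax_seq _ _ xpredT (fun x => (d x).+1)).
Qed.

End LinearForms.

Lemma Forall_cat (T : Type) (P : T -> Prop) s1 s2 :
  List.Forall P s1 -> List.Forall P s2 -> List.Forall P (s1 ++ s2).
Proof. by move=> P1 P2; apply/List.Forall_app. Qed.

Lemma Forall_map_all (T U : Type) (P : U -> Prop) (F : T -> U) s :
  (forall x, P (F x)) -> List.Forall P [seq F x | x <- s].
Proof. by move=> PF; elim: s => //= x s IH; constructor. Qed.

Lemma Forall_allpairs (T1 T2 U : Type) (P : T1 -> Prop) (Q : T2 -> Prop)
    (R : U -> Prop) (F : T1 -> T2 -> U) s1 s2 :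
  (forall x y, P x -> Q y -> R (F x y)) ->
  List.Forall P s1 -> List.Forall Q s2 -> List.Forall R [seq F x y | x <- s1, y <- s2].
Proof.
move=> PQR; elim: s1 => //= x s1 IH /List.Forall_cons_iff [Px Ps1] Qs2.
apply: Forall_cat; last exact: IH.
by apply/List.Forall_map; apply: List.Forall_impl Qs2 => y; apply: PQR.
Qed.

Lemma sum_Forall_eq0 (T : Type) (V : nmodType) (P : T -> Prop) (F : T -> V) (s : seq T) :
  List.Forall P s -> (forall x, P x -> F x = 0) -> \sum_(x <- s) F x = 0.
Proof.
move=> + F0; elim: s => [|x s IH]; first by rewrite big_nil.
by case/List.Forall_cons_iff => /F0 Fx /IH Fs; rewrite big_cons Fx Fs addr0.
Qed.

Lemma family_of_seq (T : Type) (x0 : T) (P : T -> Prop) (s : seq T) :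
  List.Forall P s ->
  exists m (a : 'I_m -> T), (forall i, P (a i)) /\
    forall (V : nmodType) (G : T -> V), \sum_(t <- s) G t = \sum_(i < m) G (a i).
Proof.
move=> Ps; exists (size s), (nth x0 s); split; last first.
  by move=> V G; rewrite (big_nth x0) big_mkord.
case=> i /= ltis; elim: s i Ps ltis => [|x s IH] [|i] //= /List.Forall_cons_iff.
  by case.
by case=> _ Ps; apply: IH.
Qed.

Section Subspaces.
Variables (K : fieldType) (X : choiceType) (P : {malg K[X]} -> Prop).
Hypothesis sP : subspace P.

Lemma subspaceD u v : P u -> P v -> P (u + v).
Proof. by move=> Pu Pv; have := (proj2 sP) 1 u v Pu Pv; rewrite scale1r. Qed.

Lemma subspaceZ a u : P u -> P (a *: u).
Proof. by move=> Pu; have := (proj2 sP) a u 0 Pu (proj1 sP); rewrite addr0. Qed.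

Lemma subspaceB u v : P u -> P v -> P (u - v).
Proof. by move=> Pu Pv; rewrite -scaleN1r; apply: subspaceD => //; apply: subspaceZ. Qed.

Lemma subspace_sum (I : Type) (r : seq I) (F : I -> {malg K[X]}) :
  List.Forall (fun i => P (F i)) r -> P (\sum_(i <- r) F i).
Proof.
elim: r => [|i r IH]; first by rewrite big_nil; case: sP.
by case/List.Forall_cons_iff => Pi Pr; rewrite big_cons; apply: subspaceD => //; apply: IH.
Qed.

End Subspaces.

Section FiniteSupport.
Variables (K : fieldType) (X : choiceType).

(* Gaussian elimination along the coordinates listed in L. *)
Lemma subspace_coord_basis (L : seq X) (P : {malg K[X]} -> Prop) :
  subspace P -> (forall u, P u -> {subset msupp u <= L}) ->
  exists s : seq ({malg K[X]} * (X -> K)),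
    List.Forall (fun e => P e.1) s /\
    forall u, P u -> u = \sum_(e <- s) ev e.2 u *: e.1.
Proof.
elim: L P => [|x0 L IH] P sP PL.
  exists [::]; split => // u Pu; rewrite big_nil; apply/malgP => x.
  by rewrite mcoeff0 mcoeff_outdom //; apply/negP => /(PL _ Pu).
have [[u0 [Pu0 u0x0]]|noPx0] := classic (exists u0, P u0 /\ u0@_x0 != 0); last first.
  apply: IH => // u Pu x xu; have := PL _ Pu _ xu; rewrite inE => /orP[/eqP ex|//].
  by case: noPx0; exists u; rewrite -ex mcoeff_neq0.
pose c b := delta K x0 b / u0@_x0.
have evc u : ev c u = u@_x0 / u0@_x0 by rewrite evMl ev_delta.
pose P' u := P u /\ u@_x0 = 0.
have sP' : subspace P'.
  split; first by split; [exact: (proj1 sP) | rewrite mcoeff0].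
  move=> a u v [Pu ux0] [Pv vx0]; split; first exact: (proj2 sP).
  by rewrite mcoeffD mcoeffZ ux0 vx0 mulr0 addr0.
have P'L u : P' u -> {subset msupp u <= L}.
  move=> [Pu ux0] x xu; have := PL _ Pu _ xu; rewrite inE => /orP[/eqP ex|//].
  by rewrite -mcoeff_neq0 ex ux0 eqxx in xu.
have [s' [Ps' es']] := IH P' sP' P'L.
exists ((u0, c) :: [seq (e.1, fun b => e.2 b - c b * ev e.2 u0) | e <- s']).
split; first by constructor => //; apply/List.Forall_map; apply: List.Forall_impl Ps' => e [].
move=> u Pu; rewrite big_cons big_map /=.
have P'u : P' (- ev c u *: u0 + u).
  split; first exact: (proj2 sP).
  by rewrite mcoeffD mcoeffZ evc mulNr divfK // addNr.
transitivity (ev c u *: u0 + (- ev c u *: u0 + u)); first by rewrite scaleNr addNKr.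
congr (_ + _); rewrite {1}(es' _ P'u); apply: eq_bigr => e _; congr (_ *: _).
by rewrite evBl evMl ev_linr; ring.
Qed.

Lemma subspace_ann_ann (L : seq X) (P : {malg K[X]} -> Prop) (u : {malg K[X]}) :
  subspace P -> (forall v, P v -> {subset msupp v <= L}) ->
  (forall rho : X -> K, (forall v, P v -> ev rho v = 0) -> ev rho u = 0) -> P u.
Proof.
move=> sP PL annu; have [s [Ps es]] := subspace_coord_basis sP PL.
suff -> : u = \sum_(e <- s) ev e.2 u *: e.1.
  apply: subspace_sum => //; apply: List.Forall_impl Ps => e.
  exact: subspaceZ.
apply/eqP; rewrite -subr_eq0; apply/eqP/malgP => x; rewrite mcoeff0.
pose rho b := delta K x b - \sum_(e <- s) e.2 b * e.1@_x.
have ev_rho v : ev rho v = (v - \sum_(e <- s) ev e.2 v *: e.1)@_x.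
  rewrite evBl ev_delta ev_suml mcoeffB; congr (_ - _); rewrite raddf_sum.
  by apply: eq_bigr => e _; rewrite evMl /= mcoeffZ.
by rewrite -ev_rho; apply: annu => v Pv; rewrite ev_rho -es // subrr mcoeff0.
Qed.

End FiniteSupport.

Section Contractions.
Variables (K : fieldType) (X Y : choiceType).

Definition contract_r (g : Y -> K) (w : {malg K[(X * Y)%type]}) : {malg K[X]} :=
  Defs.lift (fun p => g p.2 *: << p.1 >>) w.
Definition contract_l (g : X -> K) (w : {malg K[(X * Y)%type]}) : {malg K[Y]} :=
  Defs.lift (fun p => g p.1 *: << p.2 >>) w.

Lemma ev_contract_r f g w : ev f (contract_r g w) = ev (fun p => f p.1 * g p.2) w.
Proof. by rewrite ev_lift; apply: eq_in_ev => p _; rewrite evZr evU1 mulrC. Qed.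

Lemma ev_contract_l f g w : ev f (contract_l g w) = ev (fun p => g p.1 * f p.2) w.
Proof. by rewrite ev_lift; apply: eq_in_ev => p _; rewrite evZr evU1. Qed.

Lemma contract_r_tens g c d : contract_r g (tens c d) = ev g d *: c.
Proof.
apply: ev_inj => f; rewrite ev_contract_r ev_tens evZr -evZl.
by apply: eq_in_ev => x _ /=; rewrite evZl mulrC.
Qed.

Lemma contract_r_sum g (I : Type) (r : seq I) (F : I -> {malg K[(X * Y)%type]}) :
  contract_r g (\sum_(i <- r) F i) = \sum_(i <- r) contract_r g (F i).
Proof. exact: lift_sum. Qed.

Lemma tens_decomp (w : {malg K[(X * Y)%type]}) (s : seq ({malg K[X]} * (X -> K))) :
  (forall y, contract_r (delta K y) w =
             \sum_(e <- s) ev e.2 (contract_r (delta K y) w) *: e.1) ->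
  w = \sum_(e <- s) tens e.1 (contract_l e.2 w).
Proof.
move=> es; apply/malgP => -[x y]; rewrite raddf_sum /=.
under eq_bigr do rewrite mcoeff_tens.
transitivity (contract_r (delta K y) w)@_x.
  by rewrite -!ev_delta ev_contract_r; apply: eq_in_ev => p _; rewrite delta_pair.
rewrite {1}es raddf_sum; apply: eq_bigr => e _ /=.
rewrite mcoeffZ mulrC; congr (_ * _).
by rewrite -ev_delta ev_contract_l ev_contract_r.
Qed.

End Contractions.

Section GradedHopf.
Variables (K : fieldType) (B : choiceType) (H : hopf_data K B).
Hypothesis HH : graded_connected_hopf H.

Local Notation deg := (deg H).
Local Notation eps := (counitb H).
Local Notation conv := (conv H).
Local Notation dcomp := (dcomp H).
Local Notation hcomp := (hcomp H).
Local Notation in_dual := (in_dual H).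

Local Ltac hopf_axioms :=
  have [fin [[deg1 conn] [[degM degD degE degS] [[mulA mul1]
       [[coA coU] [[DM D1 EM E1] antip]]]]]] := HH.

Lemma fin_deg n : exists s : seq B, forall b, deg b = n -> b \in s.
Proof. by hopf_axioms; apply: fin. Qed.

Lemma deg_unit : deg (unitb H) = 0%N.
Proof. by hopf_axioms. Qed.

Lemma deg0_unit b : deg b = 0%N -> b = unitb H.
Proof. by hopf_axioms; apply: conn. Qed.

Lemma deg_mul a b c : c \in msupp (mulb H a b) -> deg c = (deg a + deg b)%N.
Proof. by hopf_axioms; apply: degM. Qed.

Lemma deg_comul b p : p \in msupp (comulb H b) -> (deg p.1 + deg p.2)%N = deg b.
Proof. by hopf_axioms; apply: degD. Qed.

Lemma deg_counit b : eps b != 0 -> deg b = 0%N.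
Proof. by hopf_axioms; apply: degE. Qed.

Lemma deg_antip b c : c \in msupp (antipb H b) -> deg c = deg b.
Proof. by hopf_axioms; apply: degS. Qed.

Lemma hmulr1 v : hmul H v (hone H) = v.
Proof. by hopf_axioms; case: (mul1 v). Qed.

Lemma coassoc v :
  tmap (hcomul H) id (hcomul H v) = assocr3 (tmap id (hcomul H) (hcomul H v)).
Proof. by hopf_axioms; apply: coA. Qed.

Lemma contract_l_comul v : contract_l eps (hcomul H v) = v.
Proof. by hopf_axioms; case: (coU v). Qed.

Lemma contract_r_comul v : contract_r eps (hcomul H v) = v.
Proof. by hopf_axioms; case: (coU v). Qed.

Lemma hcomulM u v : hcomul H (hmul H u v) = hmul2 H (hcomul H u) (hcomul H v).
Proof. by hopf_axioms; apply: DM. Qed.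

Lemma hcomul1 : hcomul H (hone H) = tens (hone H) (hone H).
Proof. by hopf_axioms. Qed.

Lemma hcounit1 : hcounit H (hone H) = 1.
Proof. by hopf_axioms. Qed.

Lemma antipode_l v : hmulT H (tmap (hantip H) id (hcomul H v)) = hcounit H v *: hone H.
Proof. by hopf_axioms; case: (antip v). Qed.

Lemma hcomulU b : hcomul H << b >> = comulb H b.
Proof. exact: liftU. Qed.

Lemma ev_conv f g h : ev (conv f g) h = ev (fun p => f p.1 * g p.2) (hcomul H h).
Proof. by rewrite ev_lift. Qed.

Lemma ev_comul2 a b c h :
  ev (fun t => a t.1.1 * b t.1.2 * c t.2) (comul2 H h) = ev (conv (conv a b) c) h.
Proof.
rewrite ev_lift ev_conv; apply: eq_in_ev => p _.
rewrite ev_tens hcomulU /= /Defs.conv -evMl.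
by apply: eq_in_ev => q _; rewrite evU1.
Qed.

Lemma conv_assoc a b c : conv (conv a b) c = conv a (conv b c).
Proof.
apply: functional_extensionality => x.
rewrite -[LHS]evU1 -ev_comul2 /comul2 coassoc ev_lift /tmap ev_lift hcomulU.
apply: eq_in_ev => p _; rewrite ev_tens evU1 hcomulU -evZl.
by apply: eq_in_ev => q _; rewrite evU1 /= mulrA.
Qed.

Lemma conv_epsl f : conv eps f = f.
Proof.
apply: functional_extensionality => x.
by rewrite -[RHS]evU1 -[<< x >>]contract_l_comul ev_contract_l hcomulU.
Qed.

Lemma conv_epsr f : conv f eps = f.
Proof.
apply: functional_extensionality => x.
by rewrite -[RHS]evU1 -[<< x >>]contract_r_comul ev_contract_r hcomulU.
Qed.

Lemma conv_scalel a f g : conv (fun b => a * f b) g = (fun b => a * conv f g b).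
Proof.
apply: functional_extensionality => x; rewrite /Defs.conv -evZl.
by apply: eq_in_ev => p _; rewrite mulrA.
Qed.

Lemma conv_suml I (r : seq I) (F : I -> B -> K) g :
  conv (fun b => \sum_(i <- r) F i b) g = (fun b => \sum_(i <- r) conv (F i) g b).
Proof.
apply: functional_extensionality => x; rewrite /Defs.conv -ev_suml.
by apply: eq_in_ev => p _; rewrite big_distrl.
Qed.

Lemma conv_sumr I (r : seq I) (F : I -> B -> K) g :
  conv g (fun b => \sum_(i <- r) F i b) = (fun b => \sum_(i <- r) conv g (F i) b).
Proof.
apply: functional_extensionality => x; rewrite /Defs.conv -ev_suml.
by apply: eq_in_ev => p _; rewrite big_distrr.
Qed.

Lemma conv0l g : conv (fun _ => 0) g = (fun _ => 0).
Proof.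
apply: functional_extensionality => x; rewrite /Defs.conv -[RHS](ev0l (comulb H x)).
by apply: eq_in_ev => p _ /=; rewrite mul0r.
Qed.

Lemma conv0r g : conv g (fun _ => 0) = (fun _ => 0).
Proof.
apply: functional_extensionality => x; rewrite /Defs.conv -[RHS](ev0l (comulb H x)).
by apply: eq_in_ev => p _ /=; rewrite mulr0.
Qed.

Lemma hmulU x y : hmul H << x >> << y >> = mulb H x y.
Proof. by rewrite /hmul !msuppU !oner_eq0 !big_seq_fset1 !mcoeffUU mul1r scale1r. Qed.

Lemma ev_hmul f u v :
  ev f (hmul H u v) = ev (fun a => ev (fun b => dcomul H f (a, b)) v) u.
Proof.
rewrite ev_sumr; apply: eq_bigr => a _; rewrite ev_sumr big_distrr.
by apply: eq_bigr => b _; rewrite evZr /= mulrA.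
Qed.

Lemma ev_hmul2 F w w' : ev F (hmul2 H w w') =
  ev (fun p => ev (fun q => ev F (tens (mulb H p.1 q.1) (mulb H p.2 q.2))) w') w.
Proof.
rewrite ev_sumr; apply: eq_bigr => p _; rewrite ev_sumr big_distrr.
by apply: eq_bigr => q _; rewrite evZr /= mulrA.
Qed.

Lemma comulb_unit : comulb H (unitb H) = << (unitb H, unitb H) >>.
Proof. by rewrite -hcomulU hcomul1 tensU. Qed.

Lemma conv_unit f g : conv f g (unitb H) = f (unitb H) * g (unitb H).
Proof. by rewrite /Defs.conv comulb_unit evU1. Qed.

Lemma eps_unit : eps (unitb H) = 1.
Proof. by have := hcounit1; rewrite /hcounit evU1. Qed.

Lemma deg_lt_enum N : exists L : seq B, uniq L /\ forall b, (b \in L) = (deg b < N)%N.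
Proof.
have [s sN] : exists s : seq B, forall b, (deg b < N)%N -> b \in s.
  elim: N => [|N [s sN]]; first by exists [::].
  have [t tN] := fin_deg N; exists (s ++ t) => b; rewrite ltnS leq_eqVlt mem_cat.
  by case/orP => [/eqP/tN ->|/sN ->]; rewrite ?orbT.
exists (undup [seq b <- s | deg b < N]%N); split; first exact: undup_uniq.
by move=> b; rewrite mem_undup mem_filter andb_idr //; apply: sN.
Qed.

Lemma homog_comul n h p : homog H n h -> p \in msupp (hcomul H h) ->
  (deg p.1 + deg p.2)%N = n.
Proof. by move=> hn /msupp_lift [b /hn <- /deg_comul]. Qed.

Lemma homog_comul2 n h t : homog H n h -> t \in msupp (comul2 H h) ->
  (deg t.1.1 + deg t.1.2 + deg t.2)%N = n.
Proof.
move=> hn /msupp_lift [p /(homog_comul hn) <-]; rewrite hcomulU.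
by case/msupp_tens => /deg_comul <- /msuppU1 ->.
Qed.

Lemma ev_hcomp f n v : ev f (hcomp n v) = ev (dcomp n f) v.
Proof.
rewrite ev_sumr [RHS]/ev big_mkcond; apply: eq_bigr => b _.
by rewrite /dcomp; case: ifP => _; rewrite ?evZr ?evU1 ?mulr0.
Qed.

Lemma ev_dcomp_homog f n k v : homog H n v ->
  ev (dcomp k f) v = if n == k then ev f v else 0.
Proof.
move=> hn; case: ifP => nk; last rewrite -(ev0l v);
  by apply: eq_in_ev => b /hn; rewrite /dcomp => ->; rewrite nk.
Qed.

Lemma homog_hcomp n v : homog H n (hcomp n v).
Proof.
move=> b; rewrite -mcoeff_neq0 -ev_delta ev_hcomp => /ev_neq0 [c _].
rewrite /dcomp /delta; case: (deg c =P n) => [dc|]; last by rewrite eqxx.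
by case: (c =P b) => [<-|] //; rewrite eqxx.
Qed.

Lemma sum_dcomp N f b : (deg b < N)%N -> \sum_(n < N) dcomp n f b = f b.
Proof.
move=> lt; rewrite (bigD1 (Ordinal lt)) //= big1 ?addr0; first by rewrite /dcomp eqxx.
by move=> i /eqP ne; rewrite /dcomp; case: eqP => // e; case: ne; apply: val_inj.
Qed.

Lemma hcomp_decomp N v : (forall b, b \in msupp v -> (deg b < N)%N) ->
  v = \sum_(n < N) hcomp n v.
Proof.
move=> vN; apply: ev_inj => f; rewrite ev_sumr.
under eq_bigr do rewrite ev_hcomp.
by rewrite -ev_suml; apply: eq_in_ev => b /vN /sum_dcomp ->.
Qed.

Lemma dcomp_dcomp m k f :
  dcomp m (dcomp k f) = if m == k then dcomp k f else (fun _ => 0).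
Proof.
apply: functional_extensionality => b; rewrite /dcomp.
by case: (eqVneq m k) => [->|mk]; case: eqP => // ->; rewrite (negbTE mk).
Qed.

Lemma dcomp_sum n I (r : seq I) (F : I -> B -> K) :
  dcomp n (fun b => \sum_(i <- r) F i b) = (fun b => \sum_(i <- r) dcomp n (F i) b).
Proof.
by apply: functional_extensionality => b; rewrite /dcomp; case: ifP => // _; rewrite big1.
Qed.

Lemma dcomp_conv n f g : dcomp n (conv f g) =
  (fun b => \sum_(i < n.+1) conv (dcomp i f) (dcomp (n - i) g) b).
Proof.
apply: functional_extensionality => b; rewrite /dcomp /Defs.conv -ev_suml.
transitivity (ev (fun p => if deg b == n then f p.1 * g p.2 else 0) (comulb H b)).
  by case: ifP; rewrite ?ev0l.
apply: eq_in_ev => p /deg_comul; case: eqP => [<- <-|bn pb].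
  have lt : (deg p.1 < (deg p.1 + deg p.2).+1)%N by rewrite ltnS leq_addr.
  rewrite (bigD1 (Ordinal lt)) //= big1 ?addr0; first by rewrite eqxx addKn eqxx.
  move=> i /eqP ni; case: eqP => [e|]; last by rewrite mul0r.
  by case: ni; apply: val_inj; rewrite /= -e.
rewrite big1 // => i _; case: eqP => [e1|]; last by rewrite mul0r.
case: eqP => [e2|]; last by rewrite mulr0.
by case: bn; rewrite -pb e1 e2 subnKC // -ltnS.
Qed.

Lemma in_dual_scale a f : in_dual f -> in_dual (fun b => a * f b).
Proof. by move=> [N f0]; exists N => b /f0 ->; rewrite mulr0. Qed.

Lemma in_dual_sum I (r : seq I) (F : I -> B -> K) :
  List.Forall (fun i => in_dual (F i)) r -> in_dual (fun b => \sum_(i <- r) F i b).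
Proof.
elim: r => [_|i r IH /List.Forall_cons_iff [[N1 F0] /IH [N2 r0]]].
  by exists 0%N => b _; rewrite big_nil.
by exists (N1 + N2)%N => b le; rewrite big_cons F0 ?r0 ?addr0 //; lia.
Qed.

Lemma in_dual_conv f g : in_dual f -> in_dual g -> in_dual (conv f g).
Proof.
move=> [N1 f0] [N2 g0]; exists (N1 + N2)%N => b le.
rewrite /Defs.conv -(ev0l (comulb H b)); apply: eq_in_ev => p /deg_comul e.
have [l1|l1] := leqP N1 (deg p.1); first by rewrite f0 ?mul0r.
by rewrite g0 ?mulr0 //; rewrite -e in le; lia.
Qed.

Lemma in_dual_eps : in_dual eps.
Proof.
by exists 1%N => b le; apply/eqP; apply: contraTT le => /deg_counit ->.
Qed.

Lemma in_dual_dcomp n f : in_dual (dcomp n f).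
Proof. by exists n.+1 => b le; rewrite /dcomp; case: eqP => // e; rewrite e ltnn in le. Qed.

Lemma in_dual_delta x : in_dual (delta K x).
Proof. by exists (deg x).+1 => b le; rewrite /delta; case: eqP => // e; rewrite e ltnn in le. Qed.

End GradedHopf.

Section Ideal.
Variables (K : fieldType) (B : choiceType) (H : hopf_data K B).
Hypothesis HH : graded_connected_hopf H.
Variables (phi psi : B -> K).

Local Notation eps := (counitb H).
Local Notation conv := (conv H).
Local Notation dcomp := (dcomp H).
Local Notation in_dual := (in_dual H).

Definition Igen k := dcomp k (fun x => phi x - psi x).

(* [(a, c, k)] stands for the element [a * (phi_k - psi_k) * c] of the ideal. *)
Definition Iterm (t : (B -> K) * (B -> K) * nat) := conv (conv t.1.1 (Igen t.2)) t.1.2.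

Definition Ispan (f : B -> K) := exists s,
  List.Forall (fun t => in_dual t.1.1 /\ in_dual t.1.2) s /\
  f = (fun b => \sum_(t <- s) Iterm t b).

Lemma Iphipsi_Ispan f : Iphipsi H phi psi f <-> Ispan f.
Proof.
split=> [[m [a [c [k [acdual fE]]]]] | [s [sdual ->]]].
  exists [seq (a i, c i, k i) | i <- enum 'I_m]; split.
    by apply: Forall_map_all => i; apply: acdual.
  by apply: functional_extensionality => b; rewrite fE big_map big_enum.
pose t0 : (B -> K) * (B -> K) * nat := (fun _ => 0, fun _ => 0, 0%N).
have [m [a [adual sE]]] := family_of_seq t0 sdual.
exists m, (fun i => (a i).1.1), (fun i => (a i).1.2), (fun i => (a i).2).
by split=> [//|b]; rewrite (sE _ (fun t => Iterm t b)).
Qed.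

Lemma Ispan0 : Ispan (fun _ => 0).
Proof. by exists [::]; split => //; apply: functional_extensionality => b; rewrite big_nil. Qed.

Lemma Ispan_lin a f g : Ispan f -> Ispan g -> Ispan (fun b => a * f b + g b).
Proof.
move=> [s1 [s1dual ->]] [s2 [s2dual ->]].
exists ([seq ((fun b => a * t.1.1 b), t.1.2, t.2) | t <- s1] ++ s2); split.
  apply: Forall_cat s2dual; apply/List.Forall_map.
  apply: List.Forall_impl s1dual => t [d1 d2]; split => //.
  exact: in_dual_scale.
apply: functional_extensionality => b; rewrite big_cat big_map big_distrr.
by congr (_ + _); apply: eq_bigr => t _; rewrite /Iterm !conv_scalel.
Qed.

Lemma Ispan_sum I (r : seq I) (F : I -> B -> K) :
  (forall i, Ispan (F i)) -> Ispan (fun b => \sum_(i <- r) F i b).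
Proof.
move=> FI; elim: r => [|i r IH].
  have -> : (fun b => \sum_(i <- [::]) F i b) = (fun _ => 0).
    by apply: functional_extensionality => b; rewrite big_nil.
  exact: Ispan0.
have -> : (fun b => \sum_(j <- i :: r) F j b) = (fun b => 1 * F i b + \sum_(j <- r) F j b).
  by apply: functional_extensionality => b; rewrite big_cons mul1r.
exact: Ispan_lin.
Qed.

Lemma Ispan_term t : in_dual t.1.1 -> in_dual t.1.2 -> Ispan (Iterm t).
Proof.
move=> d1 d2; exists [:: t]; split; first by constructor.
by apply: functional_extensionality => b; rewrite big_seq1.
Qed.

Lemma in_dual_Iterm t : in_dual t.1.1 -> in_dual t.1.2 -> in_dual (Iterm t).
Proof. by move=> d1 d2; do 2?apply: in_dual_conv => //; apply: in_dual_dcomp. Qed.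

Lemma Ispan_in_dual f : Ispan f -> in_dual f.
Proof.
move=> [s [sdual ->]]; apply: in_dual_sum.
by apply: List.Forall_impl sdual => t [d1 d2]; apply: in_dual_Iterm.
Qed.

Lemma Ispan_gen k : Ispan (Igen k).
Proof.
have -> : Igen k = Iterm (eps, eps, k) by rewrite /Iterm (conv_epsl HH) (conv_epsr HH).
by apply: Ispan_term; apply: in_dual_eps.
Qed.

Lemma Ispan_convr f g : Ispan f -> in_dual g -> Ispan (conv f g).
Proof.
move=> [s [sdual ->]] dg; rewrite conv_suml.
exists [seq (t.1.1, conv t.1.2 g, t.2) | t <- s]; split.
  apply/List.Forall_map; apply: List.Forall_impl sdual => t [d1 d2].
  by split => //; apply: in_dual_conv.
apply: functional_extensionality => b; rewrite big_map.
by apply: eq_bigr => t _; rewrite /Iterm (conv_assoc HH).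
Qed.

Lemma Ispan_convl f g : Ispan f -> in_dual g -> Ispan (conv g f).
Proof.
move=> [s [sdual ->]] dg; rewrite conv_sumr.
exists [seq (conv g t.1.1, t.1.2, t.2) | t <- s]; split.
  apply/List.Forall_map; apply: List.Forall_impl sdual => t [d1 d2].
  by split => //; apply: in_dual_conv.
apply: functional_extensionality => b; rewrite big_map.
by apply: eq_bigr => t _; rewrite /Iterm !(conv_assoc HH).
Qed.

Lemma Ispan_dcomp n f : Ispan f -> Ispan (dcomp n f).
Proof.
move=> [s [_ ->]]; rewrite dcomp_sum; apply: Ispan_sum => t.
rewrite /Iterm (dcomp_conv HH); apply: Ispan_sum => i.
rewrite (dcomp_conv HH) conv_suml; apply: Ispan_sum => j.
rewrite /Igen dcomp_dcomp; case: eqP => [_|_]; last by rewrite conv0r conv0l; apply: Ispan0.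
by apply: (@Ispan_term (dcomp j t.1.1, dcomp (n - i) t.1.2, t.2)); apply: in_dual_dcomp.
Qed.

End Ideal.

Section Coideal.
Variables (K : fieldType) (B : choiceType) (H : hopf_data K B).
Hypothesis HH : graded_connected_hopf H.

Local Notation deg := (deg H).
Local Notation conv := (conv H).
Local Notation dcomp := (dcomp H).
Local Notation in_dual := (in_dual H).

Lemma character_mulb chi : character H chi ->
  forall x y, ev chi (mulb H x y) = chi x * chi y.
Proof. by move=> [chiM _] x y; have := chiM << x >> << y >>; rewrite hmulU !evU1. Qed.

Lemma character_unit chi : character H chi -> chi (unitb H) = 1.
Proof. by move=> [_]; rewrite /hone evU1. Qed.

Definition dcomul_decomp (f : B -> K) (s : seq ((B -> K) * (B -> K))) :=
  forall x y, dcomul H f (x, y) = \sum_(q <- s) q.1 x * q.2 y.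

Lemma dcomul_conv f g x y : dcomul H (conv f g) (x, y) =
  ev (fun p => ev (fun q => dcomul H f (p.1, q.1) * dcomul H g (p.2, q.2))
                  (comulb H y)) (comulb H x).
Proof.
rewrite /dcomul ev_conv -hmulU hcomulM // !hcomulU ev_hmul2.
by apply: eq_in_ev => p _; apply: eq_in_ev => q _; rewrite ev_tens_mul.
Qed.

Lemma dcomul_decomp_conv f g s1 s2 : dcomul_decomp f s1 -> dcomul_decomp g s2 ->
  dcomul_decomp (conv f g) [seq (conv a.1 c.1, conv a.2 c.2) | a <- s1, c <- s2].
Proof.
move=> fs gs x y; rewrite dcomul_conv big_allpairs_dep /=.
under eq_in_ev => p _ do under eq_in_ev => q _ do
  rewrite fs gs big_distrlr (eq_bigr _ (fun a _ => eq_bigr _ (fun c _ =>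
    mulrACA (a.1 p.1) (a.2 q.1) (c.1 p.2) (c.2 q.2)))).
under eq_in_ev => p _ do rewrite ev_suml; rewrite ev_suml; apply: eq_bigr => a _.
under eq_in_ev => p _ do rewrite ev_suml; rewrite ev_suml; apply: eq_bigr => c _.
by rewrite -evMl; apply: eq_in_ev => p _; rewrite evZl.
Qed.

Lemma dcomul_decomp_in_dual f : in_dual f ->
  exists s, List.Forall (fun q => in_dual q.1 /\ in_dual q.2) s /\ dcomul_decomp f s.
Proof.
move=> [N f0]; have [L [uL memL]] := deg_lt_enum HH N.
have fM0 x y : (N <= deg x + deg y)%N -> ev f (mulb H x y) = 0.
  move=> le; rewrite -(ev0l (mulb H x y)); apply: eq_in_ev => b /(deg_mul HH) e.
  by apply: f0; rewrite e.
exists [seq (delta K z, fun y => if (deg z + deg y < N)%N then ev f (mulb H z y) else 0)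
       | z <- L]; split.
  apply: Forall_map_all => z; split; first exact: in_dual_delta.
  by exists N => y le /=; case: ltnP => // lt; lia.
move=> x y; rewrite big_map /dcomul.
have [xL|xNL] := boolP (x \in L).
  rewrite (bigD1_seq x) //= big1 ?addr0 => [|z /negbTE zx]; last first.
    by rewrite /delta eq_sym zx mul0r.
  by rewrite /delta eqxx mul1r; case: ltnP => // /fM0.
rewrite big_seq big1 => [|z zL]; last first.
  by rewrite /delta /=; case: (x =P z) => [xz|_]; [rewrite xz zL in xNL | rewrite mul0r].
by apply: fM0; move: xNL; rewrite memL -leqNgt => /leq_trans; apply; apply: leq_addr.
Qed.

Section Generators.
Variables (phi psi : B -> K).
Hypotheses (Hphi : character H phi) (Hpsi : character H psi).

Local Notation Igen := (Igen H phi psi).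
Local Notation Ispan := (Ispan H phi psi).

Lemma Ispan_unit f : Ispan f -> f (unitb H) = 0.
Proof.
move=> [s [_ ->]]; rewrite big1 // => t _.
rewrite /Iterm !conv_unit // /Igen /Defs.dcomp deg_unit //.
by rewrite (character_unit Hphi) (character_unit Hpsi) subrr if_same mulr0 mul0r.
Qed.

(* For characters, phi(xy) - psi(xy) = (phi - psi)(x) phi(y) + psi(x) (phi - psi)(y). *)
Definition Igen_split k :=
  [seq (Igen i, dcomp (k - i) phi) | i <- iota 0 k.+1] ++
  [seq (dcomp i psi, Igen (k - i)) | i <- iota 0 k.+1].

Lemma dcomul_decomp_Igen k : dcomul_decomp (Igen k) (Igen_split k).
Proof.
move=> x y; rewrite /dcomul /Igen.
have hm : homog H (deg x + deg y) (mulb H x y) by move=> b /(deg_mul HH).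
rewrite (ev_dcomp_homog _ _ hm) evBl (character_mulb Hphi) (character_mulb Hpsi).
rewrite /Igen_split big_cat !big_map /= -big_split.
have [xyk|xyNk] := eqVneq (deg x + deg y)%N k.
  have xk : deg x \in iota 0 k.+1 by rewrite mem_iota; lia.
  rewrite (bigD1_seq _ xk (iota_uniq _ _)) big1_seq => [|i /andP[xi _]].
    by rewrite /= addr0 /Igen /Defs.dcomp eqxx -xyk addKn !eqxx; ring.
  by rewrite /= /Igen /Defs.dcomp eq_sym (negbTE xi) !mul0r addr0.
rewrite big1_seq // => i /andP[_]; rewrite (mem_iota 0 k.+1) => /andP[_ lei].
rewrite /= /Igen /Defs.dcomp; case: (deg x =P i) => [xi|_]; last by rewrite !mul0r addr0.
case: (deg y =P (k - i)%N) => [yi|_]; last by rewrite !mulr0 addr0.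
by move: xyNk; rewrite xi yi; lia.
Qed.

Definition coideal_pair (q : (B -> K) * (B -> K)) :=
  [/\ in_dual q.1, in_dual q.2 & Ispan q.1 \/ Ispan q.2].

Definition Icoideal f := exists s, List.Forall coideal_pair s /\ dcomul_decomp f s.

Lemma Forall_coideal_Igen_split k : List.Forall coideal_pair (Igen_split k).
Proof.
by apply: Forall_cat; apply: Forall_map_all => i;
  split; try apply: in_dual_dcomp; [left | right]; apply: Ispan_gen.
Qed.

Lemma Icoideal_term t : in_dual t.1.1 -> in_dual t.1.2 -> Icoideal (Iterm H phi psi t).
Proof.
move=> da dc; have [sa [sad fa]] := dcomul_decomp_in_dual da.
have [sc [scd fc]] := dcomul_decomp_in_dual dc.
eexists; split; last first.
  apply: dcomul_decomp_conv fc; apply: dcomul_decomp_conv fa _.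
  exact: dcomul_decomp_Igen.
apply: (Forall_allpairs (P := coideal_pair) _ _ scd) => [q r [q1 q2 qI] [r1 r2]|].
  by split; try exact: in_dual_conv; case: qI => qI; [left | right]; apply: Ispan_convr.
apply: (Forall_allpairs _ sad (Forall_coideal_Igen_split _)) => q r [q1 q2] [r1 r2 rI].
by split; try exact: in_dual_conv; case: rI => rI; [left | right]; apply: Ispan_convl.
Qed.

Lemma Ispan_coideal f : Ispan f -> Icoideal f.
Proof.
move=> [s [sdual ->]].
elim: s sdual => [_|t s IH /List.Forall_cons_iff [[d1 d2] /IH [ss [ssc sD]]]].
  exists [::]; split=> [|x y]; first by constructor.
  rewrite /dcomul big_nil /= -[RHS](ev0l (mulb H x y)).
  by apply: eq_in_ev => b _; rewrite big_nil.
have [st [stc tD]] := Icoideal_term d1 d2.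
exists (st ++ ss); split; first exact: Forall_cat.
move=> x y; rewrite big_cat -tD -sD /dcomul /= -evDl.
by apply: eq_in_ev => b _; rewrite big_cons.
Qed.

End Generators.
End Coideal.

Section AntipodeRecursion.
Variables (K : fieldType) (B : choiceType) (H : hopf_data K B).
Hypothesis HH : graded_connected_hopf H.

Local Notation deg := (deg H).
Local Notation eps := (counitb H).
Local Notation hcomp := (hcomp H).

Definition tcomp n (w : {malg K[(B * B)%type]}) : {malg K[(B * B)%type]} :=
  Defs.lift (fun p : B * B => if (deg p.1 + deg p.2 == n)%N then << p >> else 0) w.

Lemma ev_tcomp F n w :
  ev F (tcomp n w) = ev (fun p => if (deg p.1 + deg p.2 == n)%N then F p else 0) w.
Proof. by rewrite ev_lift; apply: eq_in_ev => p _; case: ifP; rewrite ?evU1 ?ev0r. Qed.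

Lemma tcomp_sum n I (r : seq I) (F : I -> {malg K[(B * B)%type]}) :
  tcomp n (\sum_(i <- r) F i) = \sum_(i <- r) tcomp n (F i).
Proof. exact: lift_sum. Qed.

Lemma tcomp_tens n c d :
  tcomp n (tens c d) = \sum_(j < n.+1) tens (hcomp j c) (hcomp (n - j) d).
Proof.
apply: ev_inj => F; rewrite ev_tcomp ev_tens ev_sumr.
under eq_bigr do rewrite ev_tens ev_hcomp.
rewrite -ev_suml; apply: eq_in_ev => x _ /=.
have [ltxn|lenx] := ltnP (deg x) n.+1; last first.
  rewrite big1 => [|j _]; last by rewrite /Defs.dcomp; case: eqP => // xj; move: (ltn_ord j); lia.
  by rewrite -[RHS](ev0l d); apply: eq_in_ev => y _; case: eqP => // xyn; exfalso; lia.
rewrite (bigD1 (Ordinal ltxn)) //= big1 ?addr0 => [|j /eqP xNj]; last first.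
  by rewrite /Defs.dcomp; case: eqP => // xj; case: xNj; apply: val_inj.
rewrite /Defs.dcomp eqxx ev_hcomp; apply: eq_in_ev => y _; rewrite /Defs.dcomp.
by case: (deg y =P (n - deg x)%N) => [->|yNn]; case: eqP => // xyn; exfalso; lia.
Qed.

Lemma tcomp_comul_homog n h : homog H n h -> tcomp n (hcomul H h) = hcomul H h.
Proof.
move=> hn; apply: ev_inj => F; rewrite ev_tcomp; apply: eq_in_ev => p ph.
by rewrite (homog_comul HH hn ph) eqxx.
Qed.

Lemma hcomp0_scalar v : hcomp 0 v = ev eps (hcomp 0 v) *: hone H.
Proof.
apply: ev_inj => f; rewrite evZr /hone evU1 !ev_hcomp -evMl; apply: eq_in_ev => b _.
rewrite /Defs.dcomp; case: (deg b =P 0%N) => [/(deg0_unit HH) ->|_]; last by rewrite mul0r.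
by rewrite eps_unit // mul1r.
Qed.

Lemma eps_hcomp m v : m != 0%N -> ev eps (hcomp m v) = 0.
Proof.
move=> m0; rewrite ev_hcomp -(ev0l v); apply: eq_in_ev => b _; rewrite /Defs.dcomp.
case: eqP => // bm; apply/eqP; apply: contraNT m0 => /(deg_counit HH).
by rewrite bm => ->.
Qed.

Lemma hmul_scale1 u a : hmul H u (a *: hone H) = a *: u.
Proof.
apply: ev_inj => f; rewrite evZr -{2}[u](hmulr1 HH) !ev_hmul -evZl.
by apply: eq_in_ev => x _; rewrite evZr.
Qed.

Lemma hmulT_antip_tens u v : hmulT H (tmap (hantip H) id (tens u v)) = hmul H (hantip H u) v.
Proof.
apply: ev_inj => f; rewrite !ev_lift ev_tens ev_hmul ev_lift.
apply: eq_in_ev => a _; rewrite ev_comm; apply: eq_in_ev => b _.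
by rewrite ev_tens /hantip liftU; apply: eq_in_ev => x _; rewrite evU1.
Qed.

Lemma hmulT_antip_sum I (r : seq I) (F : I -> {malg K[(B * B)%type]}) :
  hmulT H (tmap (hantip H) id (\sum_(i <- r) F i)) =
  \sum_(i <- r) hmulT H (tmap (hantip H) id (F i)).
Proof. by rewrite /tmap lift_sum /hmulT lift_sum. Qed.

Lemma hmulT_antip_tcomp n c d :
  hmulT H (tmap (hantip H) id (tcomp n (tens c d))) =
  \sum_(j < n.+1) hmul H (hantip H (hcomp j c)) (hcomp (n - j) d).
Proof.
by rewrite tcomp_tens hmulT_antip_sum; apply: eq_bigr => j _; rewrite hmulT_antip_tens.
Qed.

Lemma antip_homog n h m (c d : 'I_m -> {malg K[B]}) :
  homog H n h -> hcomul H h = \sum_(i < m) tens (c i) (d i) ->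
  hantip H h = hcounit H h *: hone H -
    \sum_(i < m) \sum_(j < n) hmul H (hantip H (hcomp j (c i))) (hcomp (n - j) (d i)).
Proof.
move=> hn hE.
have hE' : hcomul H h = \sum_(i < m) tcomp n (tens (c i) (d i)).
  by rewrite -(tcomp_comul_homog hn) hE tcomp_sum.
have top : \sum_(i < m) hmul H (hantip H (hcomp n (c i))) (hcomp 0 (d i)) = hantip H h.
  rewrite -[in RHS](contract_r_comul HH h) hE' contract_r_sum /hantip lift_sum.
  apply: eq_bigr => i _; rewrite tcomp_tens contract_r_sum big_ord_recr big1 => [|j _].
    by rewrite /= add0r contract_r_tens liftZ subnn {1}hcomp0_scalar hmul_scale1.
  by rewrite contract_r_tens eps_hcomp ?scale0r // subn_eq0 -ltnNge; exact: (ltn_ord j).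
rewrite -top -(antipode_l HH) hE' hmulT_antip_sum.
rewrite (eq_bigr _ (fun i _ => hmulT_antip_tcomp n (c i) (d i))).
under eq_bigr do rewrite big_ord_recr subnn.
by rewrite big_split /= addrAC subrr add0r.
Qed.

End AntipodeRecursion.

Section Annihilator.
Variables (K : fieldType) (B : choiceType) (H : hopf_data K B).
Hypothesis HH : graded_connected_hopf H.
Variables (phi psi : B -> K).
Hypotheses (Hphi : character H phi) (Hpsi : character H psi).

Local Notation deg := (deg H).
Local Notation hcomp := (hcomp H).
Local Notation Igen := (Igen H phi psi).
Local Notation Ispan := (Ispan H phi psi).

Definition Iann (h : {malg K[B]}) := forall f, Ispan f -> ev f h = 0.

Lemma Iann_subspace : subspace Iann.
Proof.
split=> [f _|a u v Iu Iv f If]; first by rewrite ev0r.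
by rewrite ev_linr Iu // Iv // mulr0 addr0.
Qed.

Lemma Iann_hcomp n h : Iann h -> Iann (hcomp n h).
Proof. by move=> Ih f If; rewrite ev_hcomp; apply/Ih/Ispan_dcomp. Qed.

Lemma Iann_phi_eq_psi h : Iann h -> ev phi h = ev psi h.
Proof.
move=> Ih; apply/eqP; rewrite -subr_eq0 -evBl.
have [N hN] := bounded_supp deg h.
rewrite (@eq_in_ev _ _ _ (fun b => \sum_(n < N) Igen n b)) => [|b /hN bN]; last first.
  by rewrite sum_dcomp.
by rewrite ev_suml big1 // => n _; apply/Ih/Ispan_gen.
Qed.

Lemma Iann_one : Iann (hone H).
Proof. by move=> f If; rewrite /hone evU1 (Ispan_unit HH Hphi Hpsi If). Qed.

Lemma Iann_mul u v : Iann u -> Iann v -> Iann (hmul H u v).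
Proof.
move=> Iu Iv f If; have [s [sc sD]] := Ispan_coideal HH Hphi Hpsi If.
transitivity (\sum_(q <- s) ev q.1 u * ev q.2 v).
  rewrite ev_hmul; under eq_in_ev => a _ do under eq_in_ev => b _ do rewrite sD.
  under eq_in_ev => a _ do rewrite ev_suml; rewrite ev_suml.
  by apply: eq_bigr => q _; rewrite -evMl; apply: eq_in_ev => a _; rewrite evZl.
by apply: (sum_Forall_eq0 sc) => q [_ _ [/Iu->|/Iv->]]; rewrite ?mul0r ?mulr0.
Qed.

(* Expand Delta h along a coordinate basis of its left slices, which lie in the
   finite-dimensional part of Ann(I) of degree < N; the matching right factors
   are slices against functionals, in Ann(I) because I is a left ideal. *)
Lemma Iann_comul h : Iann h -> in_tens Iann Iann (hcomul H h).
Proof.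
move=> Ih; set w := hcomul H h.
have [N wN] := bounded_supp (fun p : B * B => deg p.1) w.
have [L [_ memL]] := deg_lt_enum HH N.
pose P u := Iann u /\ {subset msupp u <= L}.
have sP : subspace P.
  split=> [|a u v [Iu uL] [Iv vL]].
    by split; [case: Iann_subspace | move=> x; rewrite msupp0].
  split; first exact: (proj2 Iann_subspace).
  move=> x /(fsubsetP (msuppD_le _ _)); rewrite inE.
  by case/orP => [/(fsubsetP (msuppZ_le _ _)) /uL|/vL].
have [s [Ps es]] := subspace_coord_basis sP (fun u (Pu : P u) => proj2 Pu).
have slice y : P (contract_r (delta K y) w).
  split=> [f If|x /msupp_lift [p /wN pN /(fsubsetP (msuppZ_le _ _)) /msuppU1 ->]].
    by rewrite ev_contract_r -ev_conv; apply/Ih/Ispan_convr/in_dual_delta.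
  by rewrite memL.
have cofactor g : Iann (contract_l g w).
  move=> f If; rewrite ev_contract_l.
  pose gN b := if (deg b < N)%N then g b else 0.
  rewrite (@eq_in_ev _ _ _ (fun p => gN p.1 * f p.2)) => [|p /wN pN]; last by rewrite /gN pN.
  rewrite -ev_conv; apply/Ih/Ispan_convl => //.
  by exists N => b le; rewrite /gN ltnNge le.
have [m [a [aP sumE]]] := family_of_seq (0, fun _ => 0) Ps.
exists m, (fun i => (a i).1), (fun i => contract_l (a i).2 w).
split=> [i|]; first by split; [case: (aP i) | apply: cofactor].
rewrite {1}(tens_decomp (fun y => es _ (slice y))).
by rewrite (sumE _ (fun e => tens e.1 (contract_l e.2 w))).
Qed.

Lemma Iann_of_subcoalgebra C : graded_subspace H C -> subcoalgebra H C ->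
  (forall x, C x -> ev phi x = ev psi x) -> forall h, C h -> Iann h.
Proof.
move=> [_ Chcomp] [_ Ccomul] Ceq.
have gen0 k v : C v -> ev (Igen k) v = 0.
  by move=> Cv; rewrite -ev_hcomp evBl Ceq ?subrr //; apply: Chcomp.
have tens0 F v : C v -> (forall c d, C c -> C d -> ev F (tens c d) = 0) ->
    ev F (hcomul H v) = 0.
  move=> Cv F0; have [m [c [d [cdC ->]]]] := Ccomul v Cv.
  by rewrite ev_sumr big1 // => i _; case: (cdC i) => Cc Cd; apply: F0.
have left0 a k v : C v -> ev (conv H a (Igen k)) v = 0.
  move=> Cv; rewrite ev_conv; apply: tens0 => // c d Cc Cd.
  by rewrite ev_tens_mul gen0 ?mulr0.
move=> h Ch f [s [_ ->]]; rewrite ev_suml big1 // => t _.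
rewrite /Iterm ev_conv; apply: tens0 => // c d Cc Cd.
by rewrite ev_tens_mul left0 ?mul0r.
Qed.

Lemma Sphipsi_Iann h : Sphipsi H phi psi h <-> Iann h.
Proof.
split=> [[C [Cgr Cco Ceq Ch]]|Ih]; first exact: (Iann_of_subcoalgebra Cgr Cco Ceq).
exists Iann; split=> //.
- by split; [exact: Iann_subspace | move=> n v; apply: Iann_hcomp].
- by split; [exact: Iann_subspace | exact: Iann_comul].
- exact: Iann_phi_eq_psi.
Qed.

Lemma Iann_antip_homog n h : homog H n h -> Iann h -> Iann (hantip H h).
Proof.
elim/ltn_ind: n h => n IH h hn Ih.
have [m [c [d [cdI hE]]]] := Iann_comul Ih.
have sI := Iann_subspace.
rewrite (antip_homog HH hn hE); apply: (subspaceB sI); first exact: (subspaceZ sI _ Iann_one).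
apply: (subspace_sum sI); apply/List.Forall_forall => i _; case: (cdI i) => Ic Id.
apply: (subspace_sum sI); apply/List.Forall_forall => j _; apply: Iann_mul; last exact: Iann_hcomp.
by apply: (IH j (ltn_ord j)); [exact: homog_hcomp | exact: Iann_hcomp].
Qed.

Lemma Iann_antip h : Iann h -> Iann (hantip H h).
Proof.
move=> Ih; have [N hN] := bounded_supp deg h.
rewrite (hcomp_decomp hN) /hantip lift_sum; apply: (subspace_sum Iann_subspace).
apply/List.Forall_forall => n _.
by apply: (@Iann_antip_homog n); [exact: homog_hcomp | exact: Iann_hcomp].
Qed.

End Annihilator.

Section Duality.
Variables (K : fieldType) (B : choiceType) (H : hopf_data K B).
Hypothesis HH : graded_connected_hopf H.
Variables (phi psi : B -> K).
Hypotheses (Hphi : character H phi) (Hpsi : character H psi).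

Local Notation deg := (deg H).
Local Notation dcomp := (dcomp H).
Local Notation Ispan := (Ispan H phi psi).
Local Notation Iann := (Iann H phi psi).

Definition vec_on (L : seq B) (g : B -> K) : {malg K[B]} := \sum_(y <- L) g y *: << y >>.

Lemma ev_vec_on L a g : ev a (vec_on L g) = \sum_(y <- L) g y * a y.
Proof. by rewrite ev_sumr; apply: eq_bigr => y _; rewrite evZr evU1. Qed.

Lemma ev_vec_onC L a g : ev a (vec_on L g) = ev g (vec_on L a).
Proof. by rewrite !ev_vec_on; apply: eq_bigr => y _; rewrite mulrC. Qed.

Lemma mcoeff_vec_on L g x : uniq L -> x \in L -> (vec_on L g)@_x = g x.
Proof.
move=> uL xL; rewrite -ev_delta ev_vec_on (bigD1_seq x) //= /delta eqxx mulr1.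
by rewrite big1 ?addr0 // => y /negbTE ->; rewrite mulr0.
Qed.

Lemma msupp_vec_on L g : {subset msupp (vec_on L g) <= L}.
Proof.
move=> x; rewrite -mcoeff_neq0 -ev_delta ev_vec_on; apply: contraTT => xNL.
rewrite big_seq big1 ?eqxx // => y yL; rewrite /delta.
by case: (y =P x) => [yx|]; [rewrite -yx yL in xNL | rewrite mulr0].
Qed.

Lemma vec_on_lin L a g1 g2 :
  vec_on L (fun b => a * g1 b + g2 b) = a *: vec_on L g1 + vec_on L g2.
Proof.
rewrite /vec_on scaler_sumr -big_split.
by apply: eq_bigr => y _; rewrite scalerDl scalerA.
Qed.

Lemma vec_on0 L : vec_on L (fun _ => 0) = 0.
Proof. by rewrite /vec_on big1 // => y _; rewrite scale0r. Qed.

(* I_n is the annihilator of Ann(I)_n, by finite-dimensional duality in H_n. *)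
Lemma Ispan_dcomp_of_ann n f : (forall h, Iann h -> ev f h = 0) -> Ispan (dcomp n f).
Proof.
move=> fIann; have [s0 s0n] := fin_deg HH n.
pose L := undup [seq b <- s0 | deg b == n].
have uL : uniq L := undup_uniq _.
have memL b : (b \in L) = (deg b == n).
  by rewrite mem_undup mem_filter andb_idr // => /eqP /s0n.
pose P u := exists2 g, Ispan g & u = vec_on L g.
have sP : subspace P.
  split=> [|a u v [g1 I1 ->] [g2 I2 ->]].
    by exists (fun _ => 0); rewrite ?vec_on0 //; exact: Ispan0.
  by exists (fun b => a * g1 b + g2 b); [exact: Ispan_lin | rewrite vec_on_lin].
have [g Ig fg] : P (vec_on L (dcomp n f)).
  apply: (subspace_ann_ann sP) => [v [g _ ->]|rho rhoP]; first exact: msupp_vec_on.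
  rewrite ev_vec_onC -ev_hcomp; apply/fIann/(Iann_hcomp HH) => g Ig.
  by rewrite ev_vec_onC; apply: rhoP; exists g.
have -> : dcomp n f = dcomp n g.
  apply: functional_extensionality => b; rewrite /Defs.dcomp; case: ifP => // bn.
  have bL : b \in L by rewrite memL.
  by move: (congr1 (mcoeff b) fg); rewrite !mcoeff_vec_on // /Defs.dcomp bn.
exact: Ispan_dcomp.
Qed.

Lemma Ispan_of_ann f : in_dual H f -> (forall h, Iann h -> ev f h = 0) -> Ispan f.
Proof.
move=> [N f0] fIann.
have -> : f = (fun b => \sum_(n < N) dcomp n f b).
  apply: functional_extensionality => b; case: (ltnP (deg b) N) => [bN|Nb].
    by rewrite sum_dcomp.
  by rewrite f0 // big1 // => n _; rewrite /Defs.dcomp; case: ifP => // _; apply: f0.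
by apply: Ispan_sum => n; apply: Ispan_dcomp_of_ann.
Qed.

Lemma Ispan_dantip f : Ispan f -> Ispan (dantip H f).
Proof.
move=> If; apply: Ispan_of_ann => [|h Ih].
  have [N f0] := Ispan_in_dual HH If.
  exists N => b le; rewrite /dantip -(ev0l (antipb H b)).
  by apply: eq_in_ev => c /(deg_antip HH) cb; apply: f0; rewrite cb.
by rewrite /dantip -ev_lift; apply: (Iann_antip HH Hphi Hpsi Ih).
Qed.

End Duality.

Section Properties.
Variables (K : fieldType) (B : choiceType) (H : hopf_data K B).
Hypothesis HH : graded_connected_hopf H.
Variables (phi psi : B -> K).
Hypotheses (Hphi : character H phi) (Hpsi : character H psi).

Local Notation deg := (deg H).
Local Notation Igen := (Igen H phi psi).
Local Notation Ispan := (Ispan H phi psi).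
Local Notation Iann := (Iann H phi psi).

Lemma graded_hopf_ideal_Ispan : graded_hopf_ideal H Ispan.
Proof.
split; first by move=> f; apply: Ispan_in_dual.
split; first by split; [exact: Ispan0 | move=> a f g; apply: Ispan_lin].
split; first by move=> f g dg If; split; [apply: Ispan_convr | apply: Ispan_convl].
split; first by move=> n f; apply: Ispan_dcomp.
split.
  move=> f /(Ispan_coideal HH Hphi Hpsi) [s [sc sD]].
  have [m [q [qc sE]]] := family_of_seq (fun _ => 0, fun _ => 0) sc.
  exists m, (fun i => (q i).1), (fun i => (q i).2); split=> [//|[x y]].
  by rewrite sD (sE _ (fun q => q.1 x * q.2 y)).
split; first by move=> f; apply: Ispan_unit.
by move=> f; apply: Ispan_dantip.
Qed.

Lemma graded_hopf_subalgebra_Iann : graded_hopf_subalgebra H Iann.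
Proof.
split.
- by split; [exact: Iann_subspace | move=> n v; apply: Iann_hcomp].
- exact: Iann_one.
- exact: Iann_mul.
- by split; [exact: Iann_subspace | move=> v; apply: Iann_comul].
- exact: Iann_antip.
Qed.

Lemma ev_mid_map (chi : B -> K) G w :
  ev G (mid_map chi w) = ev (fun t => chi t.1.2 * G (t.1.1, t.2)) w.
Proof. by rewrite ev_lift; apply: eq_in_ev => t _; rewrite evZr evU1. Qed.

(* The coefficient of x (x) z in the middle contraction is the value at h of
   delta_x * (phi_k - psi_k) * delta_z, for the only k allowed by the grading. *)
Lemma mid_map_Iann n h : homog H n h -> Iann h ->
  mid_map (fun b => phi b - psi b) (comul2 H h) = 0.
Proof.
move=> hn Ih; apply/malgP => -[x z]; rewrite mcoeff0 -ev_delta ev_mid_map.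
pose k := (n - deg x - deg z)%N.
transitivity (ev (fun t => delta K x t.1.1 * Igen k t.1.2 * delta K z t.2) (comul2 H h)).
  apply: eq_in_ev => t /(homog_comul2 HH hn) tn; rewrite delta_pair /= /delta.
  case: (t.1.1 =P x) => [tx|_]; last by rewrite !mul0r mulr0.
  case: (t.2 =P z) => [tz|_]; last by rewrite !mulr0.
  have kt : deg t.1.2 == k by apply/eqP; rewrite /k -tn tx tz; lia.
  by rewrite /Igen /Defs.dcomp kt !mulr1 mul1r.
rewrite ev_comul2; apply: Ih.
by apply: (@Ispan_term _ _ _ phi psi (delta K x, delta K z, k)); apply: in_dual_delta.
Qed.

Lemma Iann_of_mid_map n h : homog H n h ->
  mid_map (fun b => phi b - psi b) (comul2 H h) = 0 -> Iann h.
Proof.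
move=> hn mid0 f [s [_ ->]]; rewrite ev_suml big1 // => t _; rewrite /Iterm -ev_comul2.
pose G (p : B * B) := if (deg p.1 + t.2 + deg p.2 == n)%N then t.1.1 p.1 * t.1.2 p.2 else 0.
transitivity (ev G (mid_map (fun b => phi b - psi b) (comul2 H h))); last by rewrite mid0 ev0r.
rewrite ev_mid_map; apply: eq_in_ev => u /(homog_comul2 HH hn) un.
rewrite /G /Igen /Defs.dcomp /=; case: (deg u.1.2 =P t.2) => [ut|uNt].
  by rewrite -ut un eqxx; ring.
have -> : (deg u.1.1 + t.2 + deg u.2 == n) = false by apply/negbTE/eqP; lia.
by rewrite !mulr0 mul0r.
Qed.

End Properties.

Theorem theorem5p3 (K : fieldType) (B : choiceType) (H : hopf_data K B)
  (HH : graded_connected_hopf H) (phi psi : B -> K)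
  (Hphi : character H phi) (Hpsi : character H psi) :
  [/\ (* (a) *)
      (forall h, Sphipsi H phi psi h <->
                 (forall f, Iphipsi H phi psi f -> ev f h = 0)),
      (* (b) *)
      graded_hopf_ideal H (Iphipsi H phi psi),
      (* (c) *)
      graded_hopf_subalgebra H (Sphipsi H phi psi) &
      (* (d) *)
      forall h, (exists n, homog H n h) ->
        (Sphipsi H phi psi h <->
         mid_map (fun b => phi b - psi b) (comul2 H h) = 0)].
Proof.
have -> : Sphipsi H phi psi = Iann H phi psi.
  apply: functional_extensionality => h; apply: propositional_extensionality.
  exact: Sphipsi_Iann.
have -> : Iphipsi H phi psi = Ispan H phi psi.
  apply: functional_extensionality => f; apply: propositional_extensionality.
  exact: Iphipsi_Ispan.
split=> //; first exact: graded_hopf_ideal_Ispan.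
  exact: graded_hopf_subalgebra_Iann.
by move=> h [n hn]; split; [apply: mid_map_Iann hn | apply: Iann_of_mid_map hn].
Qed.
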